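(* Let $D$ be a Dedekind domain with quotient field $K$, let $I$ be a finite non-empty index set, let $f_i\in D[x]$ be irreducible in $K[x]$ for each $i\in I$, and let $c$ be a non-unit of $D$ with $\mathsf{d}\bigl(\prod_{i\in I}f_i\bigr)=cD$. Put $f=\frac{1}{c}\prod_{i\in I}f_i\in\operatorname{Int}(D)$, and let $\mathcal{P}$ be the finite set of maximal ideals of $D$ containing $c$. If $f=g_1\cdots g_m$ with $g_1,\ldots,g_m$ (not necessarily irreducible) non-units of $\operatorname{Int}(D)$, then each $g_j$ is of the form \[g_j=a_j\prod_{i\in I_j}f_i,\] where $\emptyset\neq I_j\subseteq I$, $a_j\in K$, $I=I_1\uplus\cdots\uplus I_m$, $a_1\cdots a_m=c^{-1}$, and (1) $\mathsf{v}_P(a_j)\le 0$ for all maximal ideals $P$ of $D$ and all $1\le j\le m$; and (2) $\mathsf{v}_P(a_j)=0$ for all maximal ideals $P\notin\mathcal{P}$ and all $1\le j\le m$.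
   Context: $\operatorname{Int}(D)=\{h\in K[x]\mid h(D)\subseteq D\}$. For $g\in D[x]$ (or $g\in\operatorname{Int}(D)$), the fixed divisor $\mathsf{d}(g)$ is the ideal of $D$ generated by $\{g(a)\mid a\in D\}$. For a maximal ideal $P$, $\mathsf{v}_P$ is the $P$-adic valuation on $K$. *)

From HB Require Import structures.
From mathcomp Require Import all_boot all_order all_algebra.
From Stdlib Require Import ClassicalEpsilon.
Set Implicit Arguments. Unset Strict Implicit. Unset Printing Implicit Defensive.
Import Order.TTheory GRing.Theory Num.Theory.
Local Open Scope ring_scope.

Section Defs.
Variable D : idomainType.
Local Notation K := {fraction D}.

Definition tof (a : D) : {fraction D} := @FracField.tofrac D a.

Definition is_ideal (J : D -> Prop) : Prop :=
  J 0 /\ (forall x y, J x -> J y -> J (x + y)) /\ (forall r x, J x -> J (r * x)).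

Definition is_prime_ideal (J : D -> Prop) : Prop :=
  is_ideal J /\ ~ J 1 /\ (forall a b, J (a * b) -> J a \/ J b).

Definition is_maximal_ideal (J : D -> Prop) : Prop :=
  is_ideal J /\ ~ J 1 /\
  (forall J', is_ideal J' -> (forall x, J x -> J' x) ->
     (forall x, J' x) \/ (forall x, J' x <-> J x)).

Definition gen_ideal (S : D -> Prop) (x : D) : Prop :=
  exists n (r s : 'I_n -> D), (forall k, S (s k)) /\ x = \sum_(k < n) r k * s k.

Definition ideal_mul (I J : D -> Prop) (x : D) : Prop :=
  exists n (r s : 'I_n -> D), (forall k, I (r k) /\ J (s k)) /\
                              x = \sum_(k < n) r k * s k.

Fixpoint ideal_pow (P : D -> Prop) (n : nat) : D -> Prop :=
  match n with
  | 0 => fun _ => True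
  | n'.+1 => ideal_mul P (ideal_pow P n')
  end.

Definition noetherian : Prop :=
  forall J, is_ideal J -> exists s : seq D, forall x, J x <-> gen_ideal (fun y => y \in s) x.

Definition integrally_closed : Prop :=
  forall x : K, (exists p : {poly D}, p \is monic /\ root (map_poly tof p) x) ->
    exists a : D, x = tof a.

Definition dedekind : Prop :=
  noetherian /\ integrally_closed /\
  (forall P, is_prime_ideal P -> (exists x, P x /\ x != 0) -> is_maximal_ideal P).

(* Int(D) = { h in K[x] | h(D) ⊆ D }. *)
Definition intval (h : {poly K}) : Prop :=
  forall a : D, exists b : D, h.[tof a] = tof b.

Definition intval_unit (h : {poly K}) : Prop :=
  intval h /\ exists h', intval h' /\ h * h' = 1.

Definition fixdiv (g : {poly D}) : D -> Prop :=
  gen_ideal (fun y => exists a, y = g.[a]).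

Definition principal (c : D) : D -> Prop := fun x => exists r, x = r * c.

Definition ordP (P : D -> Prop) (a : D) : nat :=
  epsilon (inhabits 0%N) (fun n => ideal_pow P n a /\ ~ ideal_pow P n.+1 a).

Definition vP (P : D -> Prop) (x : K) : int :=
  epsilon (inhabits 0%Z) (fun z => exists a b : D, b != 0 /\ x = tof a / tof b /\
                                   z = (ordP P a)%:Z - (ordP P b)%:Z).
End Defs.

(** Since the f_i are irreducible in the UFD K[x], each g_j is a_j times the
  product h_j of the f_i over a block I_j of a partition of I, and
  a_1 ... a_m = 1/c.  No block is empty: a constant g_j in Int(D) divides F/c,
  with F = prod_i f_i, at every point of D, so c g_j divides the fixed divisor
  c and g_j is a unit of Int(D).  For a maximal ideal P, since c lies in d(F),
  some value F(x) has v_P(F(x)) <= v_P(c).  As g_j(x) = a_j h_j(x) lies in D,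
  the m numbers v_P(a_j) + v_P(h_j(x)) are nonnegative, and they sum to
  v_P(F(x)) - v_P(c) <= 0; so v_P(a_j) = -v_P(h_j(x)) <= 0, and v_P(a_j) = 0
  when c is not in P.  The valuations behave because D is Dedekind: a nonzero
  maximal P has an inverse t (tP in D, 1 in P + tP), which makes the P-adic
  order finite and additive. *)
From HB Require Import structures.
From mathcomp Require Import all_boot all_order all_algebra zify ring.
From Stdlib Require Import ClassicalEpsilon Classical.
From Stdlib Require List.
Import Order.TTheory GRing.Theory Num.Theory.
Set Implicit Arguments. Unset Strict Implicit. Unset Printing Implicit Defensive.
Local Open Scope ring_scope.

HB.instance Definition _ (D : idomainType) :=
  GRing.RMorphism.copy (@tof D) (@FracField.tofrac D).

Section Fractions.
Variable D : idomainType.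
Local Notation K := {fraction D}.

Definition in_D (x : K) : Prop := exists d : D, x = tof d.

Lemma tof_inj : injective (@tof D).
Proof. by move=> a b /eqP; rewrite /tof tofrac_eq => /eqP. Qed.

Lemma tof_eq0 (a : D) : (tof a == 0 :> K) = (a == 0).
Proof. exact: tofrac_eq0. Qed.

Lemma frac_repr (x : K) : exists a b : D, b != 0 /\ x = tof a / tof b.
Proof.
elim/quotW: x => r; exists r.1, r.2; split; first exact: denom_ratioP.
have r2_neq0 : tof r.2 != 0 by rewrite tof_eq0 denom_ratioP.
apply: (mulIf r2_neq0); rewrite divfK // /tof /FracField.tofrac; unlock.
change (FracField.mul (\pi_({fraction D})%qT r) (\pi_({fraction D})%qT (Ratio r.2 1))
  = \pi_({fraction D})%qT (Ratio r.1 1)).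
rewrite -FracField.pi_mul; apply/eqmodP; rewrite /= FracField.equivfE /FracField.mulf.
by rewrite !numer_Ratio ?denom_Ratio ?mulr1 ?oner_neq0 ?mulf_neq0 ?denom_ratioP ?oner_neq0 // mulrC.
Qed.

End Fractions.

Section Ideals.
Variable D : idomainType.
Implicit Types (I J P Q S X : D -> Prop).

(* Both [gen_ideal] and [ideal_mul] are sums of products subject to a constraint. *)
Definition sumprod (R : D -> D -> Prop) (x : D) : Prop :=
  exists n (r s : 'I_n -> D), (forall k, R (r k) (s k)) /\ x = \sum_(k < n) r k * s k.

Lemma sumprod0 R : sumprod R 0.
Proof. by exists 0%N, (fun _ => 0), (fun _ => 0); split=> [[]|]; rewrite ?big_ord0. Qed.

Lemma sumprod1 R r s : R r s -> sumprod R (r * s).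
Proof. by move=> Rrs; exists 1%N, (fun _ => r), (fun _ => s); rewrite big_ord1. Qed.

Lemma sumprodD R x y : sumprod R x -> sumprod R y -> sumprod R (x + y).
Proof.
move=> [n1 [r1 [s1 [R1 ->]]]] [n2 [r2 [s2 [R2 ->]]]].
pose glue (u1 : 'I_n1 -> D) (u2 : 'I_n2 -> D) k :=
  match split k with inl a => u1 a | inr b => u2 b end.
exists (n1 + n2)%N, (glue r1 r2), (glue s1 s2); split.
  by move=> k; rewrite /glue; case: (split k).
rewrite big_split_ord; congr (_ + _); apply: eq_bigr => i _.
  by rewrite /glue (unsplitK (inl _ i : 'I_n1 + 'I_n2)).
by rewrite /glue (unsplitK (inr _ i : 'I_n1 + 'I_n2)).
Qed.

Lemma is_ideal_True : is_ideal (fun _ : D => True).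
Proof. by []. Qed.

Lemma idealMr J r x : is_ideal J -> J x -> J (x * r).
Proof. by move=> [_ [_ JM]] Jx; rewrite mulrC; apply: JM. Qed.

Lemma ideal_sum J n (r s : 'I_n -> D) :
  is_ideal J -> (forall k, J (r k * s k)) -> J (\sum_(k < n) r k * s k).
Proof. by move=> [J0 [JD _]] Jrs; elim/big_ind: _. Qed.

Lemma ideal_mul_prod I J r s : I r -> J s -> ideal_mul I J (r * s).
Proof. by move=> Ir Js; apply: (@sumprod1 (fun r s => I r /\ J s)). Qed.

Lemma is_ideal_mul I J : is_ideal J -> is_ideal (ideal_mul I J).
Proof.
move=> [_ [_ JM]]; split; first exact: (@sumprod0 (fun r s => I r /\ J s)).
split; first by move=> x y; apply: (@sumprodD (fun r s => I r /\ J s)).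
move=> r x [n [a [b [Hab ->]]]]; rewrite big_distrr /=.
exists n, a, (fun k => r * b k); split; last by apply: eq_bigr => k _; rewrite mulrCA.
by move=> k; case: (Hab k) => Ia Jb; split => //; apply: JM.
Qed.

Lemma ideal_mul_min I J X : is_ideal X -> (forall r s, I r -> J s -> X (r * s)) ->
  forall x, ideal_mul I J x -> X x.
Proof.
move=> HX IJX x [n [a [b [Hab ->]]]]; apply: ideal_sum => // k.
by case: (Hab k); apply: IJX.
Qed.

Lemma gen_ideal_gen S y : S y -> gen_ideal S y.
Proof. by move=> Sy; rewrite -[y]mul1r; apply: (@sumprod1 (fun _ s => S s)). Qed.

Lemma gen_ideal_min S X : is_ideal X -> (forall y, S y -> X y) ->
  forall z, gen_ideal S z -> X z.
Proof.
move=> HX SX z [n [r [s [Ss ->]]]]; apply: ideal_sum => // k.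
by case: HX => _ [_ XM]; apply/XM/SX.
Qed.

Lemma is_ideal_principal (c : D) : is_ideal (principal c).
Proof.
split; first by exists 0; rewrite mul0r.
split; first by move=> x y [r1 ->] [r2 ->]; exists (r1 + r2); rewrite mulrDl.
by move=> r x [r1 ->]; exists (r * r1); rewrite mulrA.
Qed.

Definition ideal_adj J (a : D) (x : D) : Prop := exists j d, J j /\ x = j + a * d.

Lemma is_ideal_adj J a : is_ideal J -> is_ideal (ideal_adj J a).
Proof.
move=> [J0 [JD JM]]; split; first by exists 0, 0; rewrite mulr0 addr0.
split.
  move=> x y [j1 [d1 [J1 ->]]] [j2 [d2 [J2 ->]]]; exists (j1 + j2), (d1 + d2).
  by rewrite mulrDr addrACA; split => //; apply: JD.
move=> r x [j [d [Jj ->]]]; exists (r * j), (r * d).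
by rewrite mulrDr mulrCA; split => //; apply: JM.
Qed.

Lemma ideal_adj_sub J a x : J x -> ideal_adj J a x.
Proof. by move=> Jx; exists x, 0; rewrite mulr0 addr0. Qed.

Lemma ideal_adj_mem J a : is_ideal J -> ideal_adj J a a.
Proof. by case=> J0 _; exists 0, 1; rewrite mulr1 add0r. Qed.

Lemma maximal_ideal_prime P : is_maximal_ideal P -> is_prime_ideal P.
Proof.
move=> [HPi [P1 Pmax]]; split => //; split => // a b Pab.
case: (classic (P a)) => Pa; [by left | right].
have [Padj1 | Padj] := Pmax _ (is_ideal_adj a HPi) (@ideal_adj_sub P a).
  have [j [d [Pj Ej]]] := Padj1 1; have [_ [PD PM]] := HPi.
  have -> : b = b * j + a * b * d by rewrite [a * b]mulrC -mulrA -mulrDr -Ej mulr1.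
  by apply: PD; [apply: PM | apply: idealMr].
by case: Pa; apply/Padj/ideal_adj_mem.
Qed.

End Ideals.

Section Noetherian.
Variables (D : idomainType) (HN : noetherian D).

Lemma noetherian_chain (C : nat -> D -> Prop) :
  (forall k, is_ideal (C k)) -> (forall k x, C k x -> C k.+1 x) ->
  exists N, forall k x, C k x -> C N x.
Proof.
move=> Cid Cinc.
have Cmono k l x : (k <= l)%N -> C k x -> C l x.
  move/subnK <-; elim: (l - k)%N => // n IH Ckx; exact/Cinc/IH.
pose U x := exists k, C k x.
have HU : is_ideal U.
  split; first by exists 0%N; case: (Cid 0%N).
  split.
    move=> x y [k Ckx] [l Cly]; exists (maxn k l); case: (Cid (maxn k l)) => _ [CD _].
    by apply: CD; [apply: Cmono Ckx; apply: leq_maxl | apply: Cmono Cly; apply: leq_maxr].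
  by move=> r x [k Ckx]; exists k; case: (Cid k) => _ [_ CM]; apply: CM.
have [s Us] := HN HU.
have [N sN] : exists N, forall y, y \in s -> C N y.
  have : forall y, y \in s -> U y by move=> y ys; apply/Us/gen_ideal_gen.
  elim: s {Us} => [|y s IH] sU; first by exists 0%N.
  have [k Cky] := sU y (mem_head _ _).
  have [N CN] := IH (fun z zs => sU z (mem_behead (s := y :: s) zs)).
  exists (maxn k N) => z; rewrite inE => /predU1P [-> | zs].
    by apply: Cmono Cky; apply: leq_maxl.
  by apply: Cmono (CN z zs); apply: leq_maxr.
exists N => k x Ckx; have /Us : U x by exists k.
by apply: gen_ideal_min => // y /sN.
Qed.

Lemma noetherian_maximal (S : (D -> Prop) -> Prop) :
  (forall J, S J -> is_ideal J) -> (exists J, S J) ->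
  exists J, S J /\ forall J', S J' -> (forall x, J x -> J' x) -> forall x, J' x -> J x.
Proof.
move=> Sid [J0 SJ0]; apply: NNPP => no_max.
pose bigger J J' := S J' /\ (forall x, J x -> J' x) /\ exists x, J' x /\ ~ J x.
have grow J : S J -> exists J', bigger J J'.
  move=> SJ; apply: NNPP => no_big; apply: no_max; exists J; split => // J' SJ' JJ' x J'x.
  by apply: NNPP => Jx; apply: no_big; exists J'; split; [|split; [|exists x]].
pose C k := iter k (fun J => epsilon (inhabits J) (bigger J)) J0.
have CS k : S (C k) /\ bigger (C k) (C k.+1).
  by elim: k => [|k [_ [SCk _]]]; split => //; apply: epsilon_spec; apply: grow.
have [|k x|N CN] := @noetherian_chain C.
- by move=> k; apply: Sid; case: (CS k).
- by case: (CS k) => _ [_ [CC _]]; apply: CC.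
have [_ [_ [_ [x [CNx CNnx]]]]] := CS N; exact/CNnx/(CN N.+1).
Qed.

End Noetherian.

Section PrimeProducts.
Variable D : idomainType.
Implicit Types (J P Q X : D -> Prop) (L : seq (D -> Prop)).

Definition nonzero_ideal J : Prop := exists x, J x /\ x != 0.

Definition nonzero_prime Q : Prop := is_prime_ideal Q /\ nonzero_ideal Q.

Definition ideal_prod L : D -> Prop := foldr (@ideal_mul D) (fun _ => True) L.

Lemma ideal_prod_insert L1 L2 Q p y :
  Q p -> ideal_prod (L1 ++ L2) y -> ideal_prod (L1 ++ Q :: L2) (p * y).
Proof.
move=> Qp; elim: L1 y => [|A L1 IH] y /=; first exact: ideal_mul_prod.
move=> [n [r [s [Hrs ->]]]]; rewrite big_distrr /=.
exists n, r, (fun k => p * s k); split; last by apply: eq_bigr => k _; rewrite mulrCA.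
by move=> k; case: (Hrs k) => Ar Ls; split => //; apply: IH.
Qed.

Lemma ideal_prod_cat_min L1 L2 X : is_ideal X ->
  (forall u v, ideal_prod L1 u -> ideal_prod L2 v -> X (u * v)) ->
  forall z, ideal_prod (L1 ++ L2) z -> X z.
Proof.
elim: L1 X => [|A L1 IH] X HX L12X z /=.
  by move=> L2z; have := L12X 1 z I L2z; rewrite mul1r.
apply: ideal_mul_min => // r s Ar L1L2s.
pose X' w := forall r, A r -> X (r * w).
have HX' : is_ideal X'.
  have [X0 [XD XM]] := HX; split; first by move=> q _; rewrite mulr0.
  split; first by move=> x y X'x X'y q Aq; rewrite mulrDr; apply: XD; [apply: X'x | apply: X'y].
  by move=> q x X'x q' Aq'; rewrite mulrCA; apply/XM/X'x.
apply: (IH X' HX') => // u v L1u L2v q Aq; rewrite mulrA; apply: L12X => //.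
exact: ideal_mul_prod.
Qed.

Lemma prime_ideal_prod_factor P L : is_prime_ideal P ->
  (forall x, ideal_prod L x -> P x) ->
  exists L1 Q L2, L = L1 ++ Q :: L2 /\ forall x, Q x -> P x.
Proof.
move=> [_ [P1 Pprime]]; elim: L => [|A L IH] LP; first by case: P1; apply: LP.
case: (classic (forall x, A x -> P x)) => AP; first by exists [::], A, L.
have [a [Aa Pa]] : exists a, A a /\ ~ P a.
  by apply: NNPP => no_a; apply: AP => x Ax; apply: NNPP => Px; apply: no_a; exists x.
have [|L1 [Q [L2 [-> QP]]]] := IH; last by exists (A :: L1), Q, L2.
by move=> y Ly; case/Pprime: (LP _ (ideal_mul_prod Aa Ly)) => // /Pa.
Qed.

Lemma ideal_contains_prime_prod (HN : noetherian D) J : is_ideal J -> nonzero_ideal J ->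
  exists L, List.Forall nonzero_prime L /\ forall x, ideal_prod L x -> J x.
Proof.
pose good J := exists L, List.Forall nonzero_prime L /\ forall x, ideal_prod L x -> J x.
move=> HJ Jnz; apply: NNPP => Jbad.
have [M [[HM [Mnz Mbad]] Mmax]] := noetherian_maximal HN
  (S := fun J => is_ideal J /\ nonzero_ideal J /\ ~ good J)
  (fun J SJ => proj1 SJ) (ex_intro _ J (conj HJ (conj Jnz Jbad))).
have [M1 | M1] := classic (M 1).
  apply: Mbad; exists [::]; split=> // x _; rewrite -[x]mulr1; case: HM => _ [_]; exact.
have [Mprime | ] := classic (forall a b, M (a * b) -> M a \/ M b).
  apply: Mbad; exists [:: M]; split; first by constructor.
  by apply: ideal_mul_min => // r s Mr _; apply: idealMr.
move=> /not_all_ex_not [a] /not_all_ex_not [b] /(imply_to_and (M (a * b))) [Mab].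
move=> /not_or_and [Ma Mb].
have adj_good c : ~ M c -> good (ideal_adj M c).
  move=> Mc; apply: NNPP => adj_bad; have [x [Mx x_neq0]] := Mnz.
  have /(_ c (ideal_adj_mem c HM)) := Mmax _ (conj (is_ideal_adj c HM)
     (conj (ex_intro _ x (conj (ideal_adj_sub c Mx) x_neq0)) adj_bad)) (@ideal_adj_sub _ M c).
  by [].
have [La [LaP LaM]] := adj_good a Ma; have [Lb [LbP LbM]] := adj_good b Mb.
apply: Mbad; exists (La ++ Lb); split; first exact/List.Forall_app.
apply: ideal_prod_cat_min => // u v /LaM [j1 [d1 [Mj1 ->]]] /LbM [j2 [d2 [Mj2 ->]]].
have [_ [MD MM]] := HM.
rewrite mulrDl; apply: (MD); first by rewrite mulrC; apply: (MM).
rewrite mulrDr; apply: (MD); first exact: MM.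
by rewrite mulrACA mulrC; apply: MM.
Qed.

(* The ideal of all z with z/a in D[t] is finitely generated, so D[t] has
   bounded degree and t satisfies a monic equation. *)
Lemma common_denominator_in_D (HN : noetherian D) (HIC : integrally_closed D)
    (t : {fraction D}) (a : D) :
  a != 0 -> (forall k, in_D (t ^+ k * tof a)) -> in_D t.
Proof.
move=> a_neq0 tka.
pose C N z := exists q : {poly D},
  (size q <= N)%N /\ tof z = (map_poly (@tof D) q).[t] * tof a.
have Cid N : is_ideal (C N).
  split; first by exists 0; rewrite size_poly0 !rmorph0 horner0 mul0r.
  split.
    move=> x y [q1 [q1N E1]] [q2 [q2N E2]]; exists (q1 + q2); split.
      by apply: leq_trans (size_add _ _) _; rewrite geq_max q1N q2N.
    by rewrite !rmorphD /= hornerD mulrDl E1 E2.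
  move=> r x [q [qN E]]; exists (r *: q); split; first exact: leq_trans (size_scale_leq _ _) qN.
  by rewrite rmorphM /= map_polyZ /= hornerZ E mulrA.
have [|N CN] := noetherian_chain HN Cid.
  by move=> k x [q [qk E]]; exists q; split => //; apply: leq_trans qk _.
have [d Ed] := tka N.
have [|q [qN Eq]] := CN N.+1 d.
  by exists 'X^N; rewrite size_polyXn map_polyXn hornerXn -Ed.
apply: HIC; exists ('X^N - q); split.
  by rewrite monicE lead_coefDl ?lead_coefXn // size_polyXn size_opp ltnS.
rewrite /root rmorphB /= map_polyXn hornerD hornerN hornerXn subr_eq0.
by apply/eqP/(@mulIf _ (tof a)); rewrite ?tof_eq0 // Ed Eq.
Qed.

(* For x in P, take a shortest product of nonzero primes inside xD; one factor
   is P, and t = y/x for some y in the product of the others but not in xD. *)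
Lemma maximal_ideal_multiplier (HD : dedekind D) P :
  is_maximal_ideal P -> nonzero_ideal P ->
  exists t, ~ in_D t /\ forall p, P p -> in_D (t * tof p).
Proof.
move=> HP [x [Px x_neq0]]; have [HN [_ prime_max]] := HD.
have [HPi [P1 Pmax]] := HP.
pose X := principal x.
have XP z : X z -> P z by move=> [r ->]; case: HPi => _ [_]; apply.
have [L0 [L0P L0X]] : exists L, List.Forall nonzero_prime L /\ forall z, ideal_prod L z -> X z.
  apply: (ideal_contains_prime_prod HN (is_ideal_principal x)).
  by exists x; split => //; exists 1; rewrite mul1r.
have [n L0n] : exists n, (size L0 < n)%N by exists (size L0).+1.
elim: n L0 L0n L0P L0X => // n IH L Ln LP LX.
have [L1 [Q [L2 [LE QP]]]] :=
  prime_ideal_prod_factor (maximal_ideal_prime HP) (fun z Lz => XP z (LX z Lz)).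
move: LP; rewrite LE => /List.Forall_app [L1P /List.Forall_cons_iff [[Qprime Qnz] L2P]].
have PQ p : P p -> Q p.
  have [_ [_ Qmax]] := prime_max Q Qprime Qnz.
  by case: (Qmax P HPi QP) => [Pall | QPeq] Pp; [case: P1; apply: Pall | apply/QPeq].
have [L12X | ] := classic (forall z, ideal_prod (L1 ++ L2) z -> X z).
  apply: (IH (L1 ++ L2)) => //; last exact/List.Forall_app.
  by move: Ln; rewrite LE !size_cat /= addnS ltnS.
move=> /not_all_ex_not [y] /(imply_to_and (ideal_prod (L1 ++ L2) y)) [L12y Xny].
have tx_neq0 : tof x != 0 by rewrite tof_eq0.
exists (tof y / tof x); split.
  move=> [d Ed]; apply: Xny; exists d; apply: tof_inj.
  by rewrite rmorphM /= -Ed divfK.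
move=> p Pp; have [r Er] : X (p * y) by apply/LX; rewrite LE; apply: ideal_prod_insert => //; apply: PQ.
exists r; apply: (mulIf tx_neq0); rewrite -rmorphM /= -Er rmorphM /= mulrAC divfK //.
by rewrite mulrC.
Qed.

(* P + tP is D: otherwise it equals P, so tP is inside P and t is integral over D. *)
Lemma maximal_ideal_inverse (HD : dedekind D) P :
  is_maximal_ideal P -> nonzero_ideal P ->
  exists t, (forall p, P p -> in_D (t * tof p)) /\
    exists p0 p1, P p0 /\ P p1 /\ 1 = tof p0 + t * tof p1.
Proof.
move=> HP Pnz; have [t [tnD tP]] := maximal_ideal_multiplier HD HP Pnz.
exists t; split => //; have [HPi [P1 Pmax]] := HP; have [P0 [PD PM]] := HPi.
pose M z := exists p0 p1, P p0 /\ P p1 /\ tof z = tof p0 + t * tof p1.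
have HM : is_ideal M.
  split; first by exists 0, 0; rewrite !rmorph0 mulr0 addr0.
  split.
    move=> x y [a0 [a1 [Pa0 [Pa1 Ex]]]] [b0 [b1 [Pb0 [Pb1 Ey]]]].
    exists (a0 + b0), (a1 + b1); rewrite !rmorphD /= Ex Ey mulrDr addrACA.
    by split; [apply: PD | split; [apply: PD|]].
  move=> r x [a0 [a1 [Pa0 [Pa1 Ex]]]]; exists (r * a0), (r * a1).
  by rewrite !rmorphM /= Ex mulrDr mulrCA; split; [apply: PM | split; [apply: PM|]].
have PM' x : P x -> M x by exists x, 0; rewrite rmorph0 mulr0 addr0.
have [Mall | MP] := Pmax M HM PM'.
- by have [p0 [p1 E]] := Mall 1; exists p0, p1; rewrite -[1](rmorph1 (@tof D)).
- exfalso; apply: tnD; have [HN [HIC _]] := HD; have [x [Px x_neq0]] := Pnz.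
  apply: (common_denominator_in_D HN HIC x_neq0) => k.
  suff [d [Pd Ed]] : exists d, P d /\ t ^+ k * tof x = tof d by exists d.
  elim: k => [|k [d [Pd Ed]]]; first by exists x; rewrite expr0 mul1r.
  have [d' Ed'] := tP d Pd; exists d'; split; last by rewrite exprS -mulrA Ed Ed'.
  by apply/MP; exists 0, d; rewrite rmorph0 add0r Ed'.
Qed.

End PrimeProducts.

Section IdealPow.
Variables (D : idomainType) (P : D -> Prop).
Local Notation Pn := (ideal_pow P).

Lemma is_ideal_pow n : is_ideal (Pn n).
Proof. by elim: n => [|n IH] /=; [exact: is_ideal_True | apply: is_ideal_mul]. Qed.

Lemma ideal_powS_sub n x : Pn n.+1 x -> Pn n x.
Proof.
apply: ideal_mul_min; first exact: is_ideal_pow.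
by move=> r s _; case: (is_ideal_pow n) => _ [_]; apply.
Qed.

Lemma ideal_pow_mono n m x : (n <= m)%N -> Pn m x -> Pn n x.
Proof. by move/subnK <-; elim: (m - n)%N => // k IH /ideal_powS_sub. Qed.

Lemma ideal_pow1 x : is_ideal P -> Pn 1 x <-> P x.
Proof.
move=> HP; split; first by apply: ideal_mul_min => // r s Pr _; apply: idealMr.
by move=> Px; rewrite -[x]mulr1; apply: ideal_mul_prod.
Qed.

Lemma ideal_powD n m a b : Pn n a -> Pn m b -> Pn (n + m) (a * b).
Proof.
elim: n a => [|n IH] a /=.
  by move=> _ Pmb; rewrite add0n mulrC; apply: idealMr => //; apply: is_ideal_pow.
move=> [k [r [s [Hrs ->]]]] Pmb; rewrite big_distrl /=.
exists k, r, (fun i => s i * b); split; last by apply: eq_bigr => i _; rewrite mulrA.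
by move=> i; case: (Hrs i) => Pr Ps; split => //; apply: IH.
Qed.

End IdealPow.

(* [t] plays the role of an element of the inverse ideal P^-1 with P P^-1 = D. *)
Section MaximalInverse.
Variables (D : idomainType) (P : D -> Prop) (t : {fraction D}) (p0 p1 : D).
Hypotheses (HP : is_maximal_ideal P) (tP : forall p, P p -> in_D (t * tof p)).
Hypotheses (Pp0 : P p0) (Pp1 : P p1) (unit_decomp : 1 = tof p0 + t * tof p1).
Local Notation Pn := (ideal_pow P).

Lemma inverse_notin_D : ~ in_D t.
Proof.
move=> [d Ed]; have [[_ [PD PM]] [P1 _]] := HP; apply: P1.
have -> : 1 = p0 + d * p1 by apply: tof_inj; rewrite rmorphD rmorphM rmorph1 /= -Ed.
by apply: PD => //; apply: PM.
Qed.

Lemma mul_inverse_powS n a : Pn n.+1 a -> exists a', tof a' = t * tof a /\ Pn n a'.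
Proof.
move=> [k [r [s [Hrs ->]]]].
have [d Ed] : exists d : 'I_k -> D, forall i, t * tof (r i) = tof (d i).
  apply: (@fin_all_exists _ (fun _ => D) (fun i d => t * tof (r i) = tof d)) => i.
  by have [d Ed] := tP (proj1 (Hrs i)); exists d.
exists (\sum_(i < k) d i * s i); split.
  rewrite !rmorph_sum mulr_sumr; apply: eq_bigr => i _.
  by rewrite !rmorphM /= -Ed mulrA.
apply: ideal_sum; first exact: is_ideal_pow.
by move=> i; case: (is_ideal_pow P n) => _ [_]; apply; case: (Hrs i).
Qed.

Lemma ideal_powS_of_mul_inverse n a a' :
  Pn n a -> tof a' = t * tof a -> Pn n a' -> Pn n.+1 a.
Proof.
move=> Pna Ea' Pna'.
have -> : a = p0 * a + p1 * a'.
  apply: tof_inj; rewrite rmorphD !rmorphM /= Ea'.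
  by rewrite -[LHS]mul1r unit_decomp mulrDl [t * _]mulrC -mulrA.
by case: (is_ideal_pow P n.+1) => _ [PD _]; apply: PD; apply: ideal_mul_prod.
Qed.

Lemma mul_inverse_pow n k a :
  Pn (k + n) a -> exists a', tof a' = t ^+ k * tof a /\ Pn n a'.
Proof.
elim: k a => [|k IH] a; first by exists a; rewrite expr0 mul1r.
move=> /mul_inverse_powS [a1 [Ea1 /IH [a' [Ea' Pna']]]].
by exists a'; rewrite Ea' Ea1 exprSr mulrA.
Qed.

Lemma exact_pow_unit_part n a : Pn n a -> ~ Pn n.+1 a ->
  exists a', tof a' = t ^+ n * tof a /\ ~ P a'.
Proof.
have HPi := proj1 HP.
elim: n a => [|n IH] a Pna Pna1.
  by exists a; rewrite expr0 mul1r; split => // Pa; apply/Pna1/ideal_pow1.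
have [a1 [Ea1 Pna1']] := mul_inverse_powS Pna.
have [|a' [Ea' Pa']] := IH a1 Pna1'.
  by move=> Pn1a1; apply/Pna1/(ideal_powS_of_mul_inverse Pna Ea1).
by exists a'; rewrite Ea' Ea1 exprSr mulrA.
Qed.

Lemma ideal_pow_exact_mul n m a b : Pn n a -> ~ Pn n.+1 a ->
  Pn m b -> ~ Pn m.+1 b -> ~ Pn (n + m).+1 (a * b).
Proof.
move=> Pna Pna1 Pmb Pmb1; rewrite -addn1 => /mul_inverse_pow [c [Ec Pc]].
have [a' [Ea' Pa']] := exact_pow_unit_part Pna Pna1.
have [b' [Eb' Pb']] := exact_pow_unit_part Pmb Pmb1.
have [_ [_ Pprime]] := maximal_ideal_prime HP.
have ab'_eq : a' * b' = c.
  by apply: tof_inj; rewrite Ec !rmorphM /= Ea' Eb' exprD mulrACA.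
have : P (a' * b') by rewrite ab'_eq; apply/(ideal_pow1 _ (proj1 HP)).
by case/Pprime.
Qed.

Lemma ideal_pow_exists_notin (HN : noetherian D) (HIC : integrally_closed D) a :
  a != 0 -> exists n, ~ Pn n a.
Proof.
move=> a_neq0; apply: NNPP => all_pow; apply: inverse_notin_D.
apply: (common_denominator_in_D HN HIC a_neq0) => k.
have [|a' [Ea' _]] := @mul_inverse_pow 0 k a; last by exists a'.
by apply: NNPP => Pna; apply: all_pow; exists (k + 0)%N.
Qed.

End MaximalInverse.

Section PadicOrder.
Variables (D : idomainType) (HD : dedekind D) (P : D -> Prop).
Hypotheses (HP : is_maximal_ideal P) (Pnz : nonzero_ideal P).
Local Notation Pn := (ideal_pow P).
Local Notation K := {fraction D}.

Lemma ordP_spec a : a != 0 -> Pn (ordP P a) a /\ ~ Pn (ordP P a).+1 a.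
Proof.
move=> a_neq0; have [HN [HIC _]] := HD.
have [t [tP [p0 [p1 [Pp0 [Pp1 E1]]]]]] := maximal_ideal_inverse HD HP Pnz.
have [n Pna] := ideal_pow_exists_notin HP tP Pp0 Pp1 E1 HN HIC a_neq0.
apply: (epsilon_spec (inhabits 0%N) (fun n => Pn n a /\ ~ Pn n.+1 a)).
elim: n Pna => [|n IH] Pna; first by case: Pna.
by case: (classic (Pn n a)) => [Pn_a | /IH //]; exists n.
Qed.

Lemma ordP_eq a n : Pn n a -> ~ Pn n.+1 a -> ordP P a = n.
Proof.
move=> Pna Pna1; have a_neq0 : a != 0.
  by apply: contra_notN Pna1 => /eqP ->; case: (is_ideal_pow P n.+1).
have [Pa Pa1] := ordP_spec a_neq0.
case: (ltngtP (ordP P a) n) => // [lt_an | lt_na].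
  by case: Pa1; apply: ideal_pow_mono Pna.
by case: Pna1; apply: ideal_pow_mono Pa.
Qed.

Lemma ordP_notin a : ~ P a -> ordP P a = 0%N.
Proof. by move=> Pa; apply: ordP_eq => // /(ideal_pow1 _ (proj1 HP)). Qed.

Lemma ordP1 : ordP P 1 = 0%N.
Proof. exact/ordP_notin/(proj1 (proj2 HP)). Qed.

Lemma ordPM a b : a != 0 -> b != 0 -> ordP P (a * b) = (ordP P a + ordP P b)%N.
Proof.
move=> a_neq0 b_neq0; have [Pa Pa1] := ordP_spec a_neq0; have [Pb Pb1] := ordP_spec b_neq0.
have [t [tP [p0 [p1 [Pp0 [Pp1 E1]]]]]] := maximal_ideal_inverse HD HP Pnz.
apply: ordP_eq; first exact: ideal_powD.
exact: (ideal_pow_exact_mul HP tP Pp0 Pp1 E1).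
Qed.

Lemma ordP_prod n (F : 'I_n -> D) : (forall j, F j != 0) ->
  ordP P (\prod_(j < n) F j) = (\sum_(j < n) ordP P (F j))%N.
Proof.
elim: n F => [|n IH] F F_neq0; first by rewrite !big_ord0 ordP1.
rewrite !big_ord_recr /= ordPM ?IH //.
by apply/prodf_neq0 => j _.
Qed.

Lemma ordP_sum_le z n (r s : 'I_n -> D) : z != 0 -> z = \sum_(k < n) r k * s k ->
  exists k, s k != 0 /\ (ordP P (s k) <= ordP P z)%N.
Proof.
move=> z_neq0 Ez; apply: NNPP => all_gt.
have [_ Pz1] := ordP_spec z_neq0; apply: Pz1; rewrite {2}Ez.
apply: ideal_sum => [|k]; first exact: is_ideal_pow.
case: (is_ideal_pow P (ordP P z).+1) => P0 [_ PM]; apply: PM.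
have [-> // | sk_neq0] := eqVneq (s k) 0.
apply: ideal_pow_mono (proj1 (ordP_spec sk_neq0)).
by rewrite ltnNge; apply/negP => sk_le; apply: all_gt; exists k.
Qed.

Lemma vP_frac x a b : a != 0 -> b != 0 -> x = tof a / tof b ->
  vP P x = (ordP P a)%:Z - (ordP P b)%:Z.
Proof.
move=> a_neq0 b_neq0 Ex; rewrite /vP.
have [a' [b' [b'_neq0 [Ex' ->]]]] := epsilon_spec (inhabits 0%Z)
  (fun z => exists a b : D, b != 0 /\ x = tof a / tof b /\ z = (ordP P a)%:Z - (ordP P b)%:Z)
  (ex_intro _ _ (ex_intro _ a (ex_intro _ b (conj b_neq0 (conj Ex erefl))))).
have cross : a * b' = a' * b.
  have tb_neq0 : tof b != 0 by rewrite tof_eq0.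
  have tb'_neq0 : tof b' != 0 by rewrite tof_eq0.
  apply: tof_inj; rewrite !rmorphM /= -[tof a](divfK tb_neq0) -[tof a'](divfK tb'_neq0).
  by rewrite -Ex -Ex' mulrAC.
have a'_neq0 : a' != 0.
  by apply: contra_neq (mulf_neq0 a_neq0 b'_neq0) => a'0; rewrite cross a'0 mul0r.
have := ordPM a_neq0 b'_neq0; rewrite cross ordPM //; lia.
Qed.

Lemma vPM x y : x != 0 -> y != 0 -> vP P (x * y) = vP P x + vP P y.
Proof.
have [a [b [b_neq0 ->]]] := frac_repr x; have [c [d [d_neq0 ->]]] := frac_repr y.
move=> x_neq0 y_neq0.
have a_neq0 : a != 0 by apply: contraNneq x_neq0 => ->; rewrite rmorph0 mul0r.
have c_neq0 : c != 0 by apply: contraNneq y_neq0 => ->; rewrite rmorph0 mul0r.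
rewrite (vP_frac a_neq0 b_neq0 erefl) (vP_frac c_neq0 d_neq0 erefl).
rewrite (@vP_frac _ (a * c) (b * d)) ?mulf_neq0 //; last by rewrite !rmorphM /= invfM mulrACA.
rewrite !ordPM //; lia.
Qed.

Lemma vPV c : c != 0 -> vP P (tof c)^-1 = - (ordP P c)%:Z.
Proof.
move=> c_neq0; rewrite (@vP_frac _ 1 c) ?oner_neq0 ?ordP1 ?sub0r //.
by rewrite rmorph1 mul1r.
Qed.

Lemma vP_prod n (F : 'I_n -> K) : (forall j, F j != 0) ->
  vP P (\prod_(j < n) F j) = \sum_(j < n) vP P (F j).
Proof.
elim: n F => [|n IH] F F_neq0.
  by rewrite !big_ord0 (@vP_frac _ 1 1) ?oner_neq0 ?ordP1 // rmorph1 divr1.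
rewrite !big_ord_recr /= vPM ?IH //.
by apply/prodf_neq0 => j _.
Qed.

End PadicOrder.

Section IrreducibleFactors.
Variable F : fieldType.

Lemma irredp_dvdM (p q r : {poly F}) :
  irreducible_poly p -> p %| q * r -> (p %| q) || (p %| r).
Proof.
move=> p_irr pqr; have [pq | npq] := boolP (coprimep p q).
  by rewrite -(Gauss_dvdpr r pq) pqr orbT.
have gcd_p : gcdp p q %= p by apply: p_irr; [rewrite -coprimep_def | exact: dvdp_gcdl].
by rewrite -(eqp_dvdl _ gcd_p) dvdp_gcdr.
Qed.

Lemma irredp_dvd_prod (p : {poly F}) m (g : 'I_m -> {poly F}) :
  irreducible_poly p -> p %| \prod_(j < m) g j -> exists j, p %| g j.
Proof.
move=> p_irr; elim: m g => [|m IH] g.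
  by rewrite big_ord0 dvdp1 => /eqP p1; case: p_irr; rewrite p1.
rewrite big_ord_recr /= => /(irredp_dvdM p_irr) /orP [/IH [j pj] | pg].
  by exists (widen_ord (leqnSn m) j).
by exists ord_max.
Qed.

Lemma factor_of_prod_polyC m (g : 'I_m -> {poly F}) (u : F) j :
  u != 0 -> \prod_(k < m) g k = u%:P -> g j = ((g j)`_0)%:P.
Proof.
move=> u_neq0 prod_g.
have gj_dvd : g j %| u%:P by rewrite -prod_g (bigD1 j) //= dvdp_mulIl.
have gj_neq0 : g j != 0 by apply: contraTneq gj_dvd => ->; rewrite dvd0p polyC_eq0.
have /size_poly1P [e e_neq0 ->] : size (g j) == 1%N.
  rewrite eqn_leq size_poly_gt0 gj_neq0 andbT.
  by have := dvdp_leq _ gj_dvd; rewrite polyC_eq0 size_polyC u_neq0; apply.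
by rewrite coefC.
Qed.

Variables (I : finType) (P : I -> {poly F}).
Hypothesis P_irr : forall i, irreducible_poly (P i).

Lemma irredp_prod_factors_in m (j0 : 'I_m) (S : {set I}) (g : 'I_m -> {poly F}) u :
  u != 0 -> \prod_(j < m) g j = u *: \prod_(i in S) P i ->
  exists (s : I -> 'I_m) (a : 'I_m -> F), forall j, g j = a j *: \prod_(i in S | s i == j) P i.
Proof.
move=> u_neq0; move Sn : #|S| => n; elim: n S g Sn => [|n IH] S g Sn prod_g.
  have S0 : S = set0 by apply/eqP; rewrite -cards_eq0 Sn.
  have notS i : (i \in S) = false by rewrite S0 inE.
  exists (fun _ => j0), (fun j => (g j)`_0) => j.
  rewrite big_pred0 => [|i]; last by rewrite notS.
  rewrite alg_polyC; apply: (factor_of_prod_polyC _ u_neq0).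
  by rewrite prod_g big_pred0 ?alg_polyC // => i; rewrite notS.
have [i0 i0S] : exists i0, i0 \in S by apply/set0Pn; rewrite -card_gt0 Sn.
have prodS : \prod_(i in S) P i = P i0 * \prod_(i in S :\ i0) P i.
  by rewrite (bigD1 i0) //=; congr (_ * _); apply: eq_bigl => i; rewrite in_setD1 andbC.
have [j /dvdpP [q gjE]] : exists j, P i0 %| g j.
  by apply: irredp_dvd_prod (P_irr i0) _; rewrite prod_g dvdpZr // prodS dvdp_mulIl.
pose g' k := if k == j then q else g k.
have prod_g' : \prod_(k < m) g' k = u *: \prod_(i in S :\ i0) P i.
  apply: (mulfI (irredp_neq0 (P_irr i0))); rewrite -scalerAr -prodS -prod_g.
  rewrite [RHS](bigD1 j) // [\prod_(k < m) g' k](bigD1 j) //= /g' eqxx gjE mulrA [P i0 * q]mulrC.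
  by congr (_ * _); apply: eq_bigr => k /negbTE ->.
have [|s' [a' g'E]] := IH _ g' _ prod_g'; first by move: Sn; rewrite (cardsD1 i0) i0S => -[].
exists (fun i => if i == i0 then j else s' i), a' => k.
have [-> | kj] := eqVneq k j.
  have qE : q = g' j by rewrite /g' eqxx.
  rewrite (bigD1 i0) /= ?eqxx ?i0S // gjE qE g'E -scalerAl mulrC.
  congr (_ *: (_ * _)); apply: eq_bigl => i; rewrite in_setD1.
  by case: (eqVneq i i0) => [->|]; rewrite ?andbF ?andbT.
have gkE : g k = g' k by rewrite /g' (negbTE kj).
rewrite gkE g'E; congr (_ *: _); apply: eq_bigl => i; rewrite in_setD1.
by case: (eqVneq i i0) => [->|]; rewrite ?(eq_sym j) ?(negbTE kj) ?andbF.
Qed.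

Lemma irredp_prod_factors m (g : 'I_m -> {poly F}) u :
  (0 < #|I|)%N -> u != 0 -> \prod_(j < m) g j = u *: \prod_i P i ->
  exists (s : I -> 'I_m) (a : 'I_m -> F),
    (forall j, g j = a j *: \prod_(i | s i == j) P i) /\ \prod_(j < m) a j = u.
Proof.
move=> I_gt0 u_neq0 prod_g.
have prod_gT : \prod_(j < m) g j = u *: \prod_(i in [set: I]) P i.
  by rewrite prod_g; congr (_ *: _); apply: eq_bigl => i; rewrite inE.
have [j0 _] : exists j0 : 'I_m, true.
  have [i0 _] := card_gt0P I_gt0; have [|j _] := irredp_dvd_prod (P_irr i0) (g := g).
    by rewrite prod_g dvdpZr // (bigD1 i0) //= dvdp_mulIl.
  by exists j.
have [s [a gE]] := irredp_prod_factors_in j0 u_neq0 prod_gT.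
have {}gE j : g j = a j *: \prod_(i | s i == j) P i.
  by rewrite gE; congr (_ *: _); apply: eq_bigl => i; rewrite inE.
exists s, a; split => //.
have P_neq0 : \prod_i P i != 0 by apply/prodf_neq0 => i _; apply: irredp_neq0.
have : (\prod_(j < m) a j - u) *: \prod_i P i = 0.
  rewrite scalerBl -prod_g (eq_bigr _ (fun j _ => gE j)) scaler_prod.
  by rewrite [\prod_i P i](partition_big s xpredT) // subrr.
by move/eqP; rewrite scaler_eq0 (negbTE P_neq0) orbF subr_eq0 => /eqP.
Qed.

End IrreducibleFactors.

Section FixedDivisorFactors.
Variable D : idomainType.
Local Notation K := {fraction D}.

Lemma intvalM (p q : {poly K}) : intval p -> intval q -> intval (p * q).
Proof.
move=> p_int q_int a; have [b Eb] := p_int a; have [b' Eb'] := q_int a.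
by exists (b * b'); rewrite hornerM Eb Eb' rmorphM.
Qed.

Lemma intval_prod m (Q : pred 'I_m) (g : 'I_m -> {poly K}) :
  (forall j, intval (g j)) -> intval (\prod_(j < m | Q j) g j).
Proof.
move=> g_int; apply: big_ind => //; last by move=> p q; apply: intvalM.
by move=> a; exists 1; rewrite hornerC rmorph1.
Qed.

Lemma maximal_ideal_nonzero (P : D -> Prop) (c : D) :
  is_maximal_ideal P -> c != 0 -> c \isn't a GRing.unit -> nonzero_ideal P.
Proof.
move=> [HPi [P1 Pmax]] c_neq0 c_nunit; apply: NNPP => P0.
have Pc x : P x -> principal c x.
  move=> Px; exists 0; rewrite mul0r; apply/eqP; apply: contraT => x_neq0.
  by exfalso; apply: P0; exists x.
have [cD | cP] := Pmax _ (is_ideal_principal c) Pc.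
  have [r Er] := cD 1; move/negP: c_nunit; apply; apply/unitrP.
  by exists r; rewrite -Er mulrC.
by apply: P0; exists c; split => //; apply/cP; exists 1; rewrite mul1r.
Qed.

(* A constant factor e of F/c in Int(D) divides every value of F/c, so c e
   divides c, the fixed divisor of F. *)
Lemma intval_const_factor_unit (F : {poly D}) (c : D) m (g : 'I_m -> {poly K}) j e :
  c != 0 -> fixdiv F c -> (forall k, intval (g k)) ->
  (tof c)^-1 *: map_poly (@tof D) F = \prod_(k < m) g k -> g j = e%:P ->
  intval_unit (g j).
Proof.
move=> c_neq0 Fc g_int prod_g gjE; have [e' Ee'] := g_int j 0.
rewrite gjE hornerC in Ee'; rewrite {}Ee' in gjE.
have tc_neq0 : (tof c)^-1 != 0 by rewrite invr_eq0 tof_eq0.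
have ceF x : principal (c * e') F.[x].
  have [r Er] := intval_prod (fun k => k != j) g_int x; exists r; apply: tof_inj.
  have := congr1 (horner^~ (tof x)) prod_g; rewrite (bigD1 j) //= gjE.
  rewrite hornerZ horner_map hornerM hornerC Er !rmorphM /= => Fx.
  by apply: (mulfI tc_neq0); rewrite Fx mulrCA mulKf ?tof_eq0 // mulrC.
have [r Er] : principal (c * e') c.
  by apply: gen_ideal_min Fc; [exact: is_ideal_principal | move=> y [x ->]].
have e'r : e' * r = 1 by apply: (mulfI c_neq0); rewrite mulr1 [RHS]Er; ring.
split; first exact: g_int.
exists (tof r)%:P; split; first by move=> x; exists r; rewrite hornerC.
by rewrite gjE -polyCM -rmorphM /= e'r rmorph1.
Qed.

Lemma vP_factors (HD : dedekind D) (P : D -> Prop) (F : {poly D}) (c : D) m (a : 'I_m -> K)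
    (h : 'I_m -> {poly D}) :
  is_maximal_ideal P -> nonzero_ideal P -> c != 0 -> fixdiv F c ->
  F = \prod_(j < m) h j -> \prod_(j < m) a j = (tof c)^-1 ->
  (forall j, intval (a j *: map_poly (@tof D) (h j))) ->
  exists w : 'I_m -> nat,
    (forall j, vP P (a j) = - (w j)%:Z) /\ (\sum_(j < m) w j <= ordP P c)%N.
Proof.
move=> HP Pnz c_neq0 [n [r [ys [Fys Ec]]]] FE prod_a ah_int.
have [k [Fx_neq0 Fx_le]] := ordP_sum_le HD HP Pnz c_neq0 Ec.
have [x Ex] := Fys k; rewrite {}Ex in Fx_neq0 Fx_le.
have hx_neq0 j : (h j).[x] != 0.
  by move: Fx_neq0; rewrite FE horner_prod => /prodf_neq0; apply.
have ordP_Fx : ordP P F.[x] = (\sum_(j < m) ordP P (h j).[x])%N.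
  by rewrite FE horner_prod ordP_prod.
have a_neq0 j : a j != 0.
  have : \prod_(j < m) a j != 0 by rewrite prod_a invr_eq0 tof_eq0.
  by move/prodf_neq0; apply.
have vP_ah_ge0 j : 0 <= vP P (a j) + (ordP P (h j).[x])%:Z.
  have [b Eb] := ah_int j x; rewrite hornerZ horner_map in Eb.
  have b_neq0 : b != 0 by rewrite -tof_eq0 -Eb mulf_neq0 ?tof_eq0.
  by rewrite (vP_frac HD HP Pnz b_neq0 (hx_neq0 j)) ?subrK // -Eb mulfK ?tof_eq0.
have vP_ah_sum : \sum_(j < m) (vP P (a j) + (ordP P (h j).[x])%:Z) <= 0.
  rewrite big_split /= -vP_prod // prod_a vPV // -(big_morph _ PoszD (erefl 0%:Z)).
  by rewrite -ordP_Fx addrC subr_le0 lez_nat.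
have vP_ah0 j : vP P (a j) + (ordP P (h j).[x])%:Z = 0.
  have sum0 : \sum_(k < m) (vP P (a k) + (ordP P (h k).[x])%:Z) = 0.
    by apply/eqP; rewrite eq_le vP_ah_sum sumr_ge0.
  exact: (psumr_eq0P (fun k _ => vP_ah_ge0 k) sum0).
exists (fun j => ordP P (h j).[x]); split; last by rewrite -ordP_Fx.
by move=> j; apply/eqP; rewrite -subr_eq0 opprK vP_ah0.
Qed.
End FixedDivisorFactors.

Theorem lemma3p4 (D : idomainType) (HD : dedekind D)
  (I : finType) (HI : (0 < #|I|)%N) (f : I -> {poly D})
  (Hirr : forall i, irreducible_poly (map_poly (@tof D) (f i)))
  (c : D) (Hc0 : c != 0) (Hcu : c \isn't a GRing.unit)
  (Hd : forall x, fixdiv (\prod_(i : I) f i) x <-> principal c x)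
  (m : nat) (g : 'I_m -> {poly {fraction D}})
  (Hg_int : forall j, intval (g j)) (Hg_nu : forall j, ~ intval_unit (g j))
  (Hfact : (tof c)^-1 *: map_poly (@tof D) (\prod_(i : I) f i) = \prod_(j < m) g j) :
  exists (Ij : 'I_m -> {set I}) (a : 'I_m -> {fraction D}),
    (forall j, Ij j != set0) /\
    (forall j, g j = a j *: \prod_(i in Ij j) map_poly (@tof D) (f i)) /\
    (forall i, exists! j, i \in Ij j) /\
    \prod_(j < m) a j = (tof c)^-1 /\
    (forall P, is_maximal_ideal P -> forall j, vP P (a j) <= 0) /\
    (forall P, is_maximal_ideal P -> ~ P c -> forall j, vP P (a j) = 0).
Proof.
have cV_neq0 : (tof c)^-1 != 0 by rewrite invr_eq0 tof_eq0.
have prod_g : \prod_(j < m) g j = (tof c)^-1 *: \prod_i map_poly (@tof D) (f i).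
  by rewrite -Hfact rmorph_prod.
have [s [a [gE prod_a]]] := irredp_prod_factors Hirr HI cV_neq0 prod_g.
pose Ij j := [set i | s i == j].
have gIE j : g j = a j *: \prod_(i in Ij j) map_poly (@tof D) (f i).
  by rewrite gE; congr (_ *: _); apply: eq_bigl => i; rewrite inE.
have cF : fixdiv (\prod_i f i) c by apply/Hd; exists 1; rewrite mul1r.
have vP_a P : is_maximal_ideal P -> exists w : 'I_m -> nat,
    (forall j, vP P (a j) = - (w j)%:Z) /\ (\sum_(j < m) w j <= ordP P c)%N.
  move=> HP; apply: (vP_factors HD HP (maximal_ideal_nonzero HP Hc0 Hcu) Hc0 cF
    (h := fun j => \prod_(i | s i == j) f i) _ prod_a) => [|j].
    by rewrite (partition_big s xpredT).
  by rewrite rmorph_prod -gE.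
exists Ij, a; split; [|split; [exact: gIE|split; [|split; [exact: prod_a|split]]]].
- move=> j; apply/negP => /eqP Ij0; apply: (Hg_nu j).
  apply: (intval_const_factor_unit (e := a j) Hc0 cF Hg_int Hfact).
  by rewrite gIE Ij0 big_set0 alg_polyC.
- by move=> i; exists (s i); split => [|j]; rewrite inE // => /eqP.
- by move=> P HP j; have [w [-> _]] := vP_a P HP; rewrite oppr_le0.
- move=> P HP Pc j; have [w [-> sum_w]] := vP_a P HP.
  move: sum_w; rewrite (ordP_notin HD HP (maximal_ideal_nonzero HP Hc0 Hcu) Pc).
  by rewrite leqn0 sum_nat_eq0 => /forallP/(_ j)/eqP ->.
Qed.
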